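(* Let $d\ge 1$ and let $(f_0, f_1, \ldots, f_{d-1})$ be a finite sequence of integers with $f_i > 0$ for all $i$. Put $f_{-1}=1$. The following conditions are equivalent: (i) there is a pure quasi-forest $\Delta$ of dimension $d-1$ with $f(\Delta) = (f_0, \ldots, f_{d-1})$; (ii) there is a pure forest $\Delta$ of dimension $d-1$ with $f(\Delta) = (f_0, \ldots, f_{d-1})$; (iii) the integers $c_0,\ldots,c_d$ defined by $\sum_{i=0}^{d} f_{i-1}(x-1)^{i} = \sum_{i=0}^{d} c_i x^i$ satisfy $\sum_{i=k}^{d} c_i > 0$ for each $1 \le k \le d$ and $c_i \le 0$ for each $1 \le i < d$; (iv) the integers $b_1,\ldots,b_d$ defined by $\sum_{i=1}^{d} f_{i-1}(x-1)^{i-1} = \sum_{i=1}^{d} b_i x^{i-1}$ satisfy $0 < b_1 \le b_2 \le \cdots \le b_d$.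
   Context: A simplicial complex $\Delta$ on $[n]=\{1,\ldots,n\}$ is a collection of subsets of $[n]$ such that $\{i\}\in\Delta$ for every $i\in[n]$ and $G\subset F\in\Delta$ implies $G\in\Delta$. If $d=\max\{|F|:F\in\Delta\}$, then $\dim\Delta=d-1$. Facets are maximal faces; $\Delta$ is pure if all facets have the same cardinality. The $f$-vector is $f(\Delta)=(f_0,\ldots,f_{d-1})$, where $f_i$ is the number of faces with $i+1$ elements. For facets $F_{i_1},\ldots,F_{i_q}$, $\langle F_{i_1},\ldots,F_{i_q}\rangle$ denotes the subcomplex of all faces contained in some $F_{i_j}$. A facet $F$ of $\Delta$ is a leaf if there is a facet $G\neq F$ (a branch of $F$) with $H\cap F\subset G\cap F$ for all facets $H\neq F$. A quasi-forest is a simplicial complex whose facets admit an ordering $F_1,\ldots,F_s$ (a leaf order) such that for each $1<j\le s$, $F_j$ is a leaf of $\langle F_1,\ldots,F_j\rangle$. A forest is a simplicial complex such that for every nonempty subset $\{F_{i_1},\ldots,F_{i_q}\}$ of its facets, $\langle F_{i_1},\ldots,F_{i_q}\rangle$ has a leaf. (A complex with a single facet is regarded as a quasi-forest and forest.) *)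

From mathcomp Require Import all_boot all_order all_algebra.
Set Implicit Arguments. Unset Strict Implicit. Unset Printing Implicit Defensive.
Import GRing.Theory Num.Theory.

Section Complexes.
Variable T : finType.

Definition simplicial_complex (D : {set {set T}}) : Prop :=
  (forall x : T, [set x] \in D) /\
  (forall F G : {set T}, G \subset F -> F \in D -> G \in D).

Definition facets (D : {set {set T}}) : {set {set T}} :=
  [set F in D | [forall G in D, (F \subset G) ==> (G == F)]].

(* pure of dimension d-1: every facet has exactly d elements *)
Definition pure_dim (D : {set {set T}}) (d : nat) : Prop :=
  forall F, F \in facets D -> #|F| = d.

Definition fvec (D : {set {set T}}) (i : nat) : nat :=
  #|[set F in D | #|F| == i.+1]|.

Definition is_leaf (S : {set {set T}}) (F : {set T}) : bool :=
  (F \in S) &&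
  [exists G in S, (G != F) &&
     [forall H in S, (H != F) ==> (H :&: F \subset G :&: F)]].

Definition quasi_forest (D : {set {set T}}) : Prop :=
  exists s : seq {set T},
    perm_eq s (enum (facets D)) /\
    forall j, 1 < j <= size s ->
      is_leaf [set F in take j s] (nth set0 s j.-1).

(* forest: every subcomplex generated by a nonempty set of facets has a leaf;
   a subcomplex with a single facet is regarded as a forest, so the leaf
   condition is imposed for sets of at least two facets. *)
Definition forest (D : {set {set T}}) : Prop :=
  forall S : {set {set T}}, S \subset facets D -> 1 < #|S| ->
    exists F, is_leaf S F.

End Complexes.

Local Open Scope ring_scope.

Definition fshift (f : nat -> int) (i : nat) : int :=
  if i is i'.+1 then f i' else 1.

Definition hpoly (d : nat) (f : nat -> int) : {poly int} :=
  \sum_(i < d.+1) (fshift f i)%:P * ('X - 1) ^+ i.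

Definition bpoly (d : nat) (f : nat -> int) : {poly int} :=
  \sum_(i < d) (f i)%:P * ('X - 1) ^+ i.

Definition cc (d : nat) (f : nat -> int) (i : nat) : int := (hpoly d f)`_i.
Definition bb (d : nat) (f : nat -> int) (i : nat) : int := (bpoly d f)`_i.-1.

Definition has_fvector (n : nat) (D : {set {set 'I_n}}) (d : nat)
  (f : nat -> int) : Prop :=
  forall i, (i < d)%N -> (fvec D i)%:Z = f i.

(* Along a leaf order F_1, ..., F_s of a pure quasi-forest, each facet F_j
   (j > 1) meets the earlier ones inside a single separator S_j = G_j :&: F_j
   of some size m_j, so adding F_j adds the subsets of F_j not in S_j.  Hence
   f_{k-1} = s 'C(d, k) - \sum_j 'C(m_j, k), i.e.
   \sum_i f_{i-1} (x - 1)^i = s x^d - \sum_j x^{m_j}, and dividing by x - 1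
   gives b_{t+1} = 1 + #{j | m_j <= t}: the b_i are positive and
   nondecreasing, and c_i = b_i - b_{i+1} turns this into (iii).  Conversely,
   nondecreasing b_i prescribe the separator sizes m_j, and gluing d-sets to
   initial segments [0, m_j) of a base facet [0, d) realizes them; since any
   two of these facets meet in an initial segment, a facet with the largest
   separator is always a leaf, so the complex is a forest. *)

From mathcomp Require Import all_boot all_order all_algebra zify ring.
Import Order.TTheory GRing.Theory Num.Theory.
Set Implicit Arguments. Unset Strict Implicit. Unset Printing Implicit Defensive.

Section LeafSequences.
Variable T : finType.
Implicit Types (D S : {set {set T}}) (L s : seq {set T}) (A F G H : {set T}).

Definition generated L : {set {set T}} := [set A : {set T} | has (fun H => A \subset H) L].

Definition nfaces D k := #|[set A in D | #|A| == k]|.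

(* [L] is a leaf order read backwards: its head [F] is a leaf of [F :: L] with
   branch [G], and [ms] lists the sizes of the separators [G :&: F]. *)
Inductive leaf_seq (d : nat) : seq {set T} -> seq nat -> Prop :=
| LeafSeq1 F : #|F| = d -> leaf_seq d [:: F] [::]
| LeafSeqCons F G L ms : #|F| = d -> G \in L ->
    {in L, forall H, H :&: F \subset G :&: F} ->
    leaf_seq d L ms -> leaf_seq d (F :: L) (#|G :&: F| :: ms).

Lemma nfaces_generated1 F k : nfaces (generated [:: F]) k = 'C(#|F|, k).
Proof.
rewrite -cards_draws; apply: eq_card => A.
by rewrite !inE /= orbF andbC.
Qed.

Lemma nfaces_generated_cons F G L k : G \in L ->
    {in L, forall H, H :&: F \subset G :&: F} ->
  nfaces (generated (F :: L)) k + 'C(#|G :&: F|, k) =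
  nfaces (generated L) k + 'C(#|F|, k).
Proof.
move=> GL leaf; rewrite /nfaces -!cards_draws.
set X := [set A : {set T} | A \subset F & #|A| == k].
set Y := [set A in generated L | #|A| == k].
have -> : [set A in generated (F :: L) | #|A| == k] = X :|: Y.
  by apply/setP=> A; rewrite !inE /= andb_orl andbC.
have -> : [set A : {set T} | A \subset G :&: F & #|A| == k] = X :&: Y.
  apply/setP=> A; rewrite !inE subsetI; apply/idP/idP.
    case/andP=> /andP [sAG ->] ->; rewrite !andbT /=.
    by apply/hasP; exists G.
  case/andP=> /andP [sAF ->] /andP [/hasP [H HL sAH] _]; rewrite andbT.
  have := leaf H HL; rewrite subsetI => /andP [sHFG _].
  by rewrite sAF andbT (subset_trans _ sHFG) // subsetI sAH.
by rewrite cardsUI addnC.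
Qed.

Lemma leaf_seq_size d L ms : leaf_seq d L ms -> size L = (size ms).+1.
Proof. by elim=> // F G L' ms' _ _ _ _ /= ->. Qed.

Lemma leaf_seq_sep_le d L ms : leaf_seq d L ms -> all (leq^~ d) ms.
Proof.
elim=> // F G L' ms' cF _ _ _ /= ->.
by rewrite -cF subset_leq_card ?subsetIr.
Qed.

Lemma nfaces_leaf_seq d L ms k : leaf_seq d L ms ->
  nfaces (generated L) k + \sum_(m <- ms) 'C(m, k) = size L * 'C(d, k).
Proof.
elim=> [F cF | F G L' ms' cF GL leaf _ IH].
  by rewrite big_nil addn0 mul1n nfaces_generated1 cF.
rewrite big_cons addnA nfaces_generated_cons // cF addnAC IH.
by rewrite mulSn addnC.
Qed.

Lemma face_sub_facet D A : A \in D -> exists2 F, F \in facets D & A \subset F.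
Proof.
move=> AD; pose P := [pred G | (G \in D) && (A \subset G)].
have PA : P A by rewrite /= AD subxx.
case: (arg_maxnP (fun G : {set T} => #|G|) PA) => F /andP [FD sAF] maxF.
exists F => //; rewrite inE FD; apply/forall_inP=> G GD; apply/implyP=> sFG.
by rewrite eq_sym eqEcard sFG [_ <= _]maxF //= GD (subset_trans sAF sFG).
Qed.

Lemma generated_facets D s :
    (forall F G, G \subset F -> F \in D -> G \in D) ->
    perm_eq s (enum (facets D)) ->
  D = generated s.
Proof.
move=> closed ps; apply/setP=> A; rewrite inE; apply/idP/hasP.
  case/face_sub_facet=> F FD sAF; exists F => //.
  by rewrite (perm_mem ps) mem_enum.
case=> F; rewrite (perm_mem ps) mem_enum inE => /andP [FD _] sAF.
exact: closed sAF FD.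
Qed.

Lemma mem_facets_generated L F : F \in facets (generated L) -> F \in L.
Proof.
rewrite inE => /andP [/[dup] FD]; rewrite inE => /hasP [H HL sFH] /forall_inP max.
suff /eqP <- : H == F by [].
by rewrite (implyP (max H _)) // inE; apply/hasP; exists H.
Qed.

Lemma simplicial_generated L :
  (forall x, exists2 H, H \in L & x \in H) -> simplicial_complex (generated L).
Proof.
move=> cover; split=> [x | F G sGF].
  by have [H HL xH] := cover x; rewrite inE; apply/hasP; exists H; rewrite ?sub1set.
rewrite !inE => /hasP [H HL sFH]; apply/hasP; exists H => //.
exact: subset_trans sGF sFH.
Qed.

Lemma pure_generated L d : {in L, forall F, #|F| = d} -> pure_dim (generated L) d.
Proof. by move=> cL F /mem_facets_generated /cL. Qed.

Definition leaf_order s : Prop :=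
  forall j, 1 < j <= size s -> is_leaf [set F in take j s] (nth set0 s j.-1).

Lemma leaf_order_rcons s F :
  leaf_order (rcons s F) <->
  leaf_order s /\ (s != [::] -> is_leaf [set G in rcons s F] F).
Proof.
have take_rcons j : j <= size s -> take j (rcons s F) = take j s.
  by move=> le_js; rewrite -cats1 takel_cat.
have nth_rcons_lt j : 0 < j <= size s -> nth set0 (rcons s F) j.-1 = nth set0 s j.-1.
  by move=> hj; rewrite nth_rcons (_ : j.-1 < size s) //; lia.
have last_leaf : is_leaf [set G in rcons s F] F =
    is_leaf [set G in take (size s).+1 (rcons s F)] (nth set0 (rcons s F) (size s)).
  by rewrite take_oversize ?size_rcons // nth_rcons ltnn eqxx.
rewrite /leaf_order size_rcons; split=> [lo | [lo s_leaf] j /andP [j_gt1]].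
  split=> [j /andP [j_gt1 le_js] | s_n0].
    by rewrite -take_rcons // -nth_rcons_lt ?lo ?j_gt1 ?(leq_trans le_js); lia.
  by rewrite last_leaf lo // ltnS lt0n leqnn andbT size_eq0.
move=> le_j; have [j_eq | ne_j] := eqVneq j (size s).+1.
  by subst j; rewrite -last_leaf s_leaf // -size_eq0 -lt0n -ltnS.
by rewrite take_rcons ?nth_rcons_lt ?lo ?j_gt1 //; lia.
Qed.

Lemma leaf_seq_of_leaf_order d s : uniq s -> {in s, forall F, #|F| = d} ->
  leaf_order s -> s != [::] -> exists ms, leaf_seq d (rev s) ms.
Proof.
elim/last_ind: s => // s F IH; rewrite rcons_uniq => /andP [Fs us] cs.
case/leaf_order_rcons=> lo F_leaf _; rewrite rev_rcons.
have cF : #|F| = d by rewrite cs // mem_rcons mem_head.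
have [-> | s_n0] := eqVneq s [::]; first by exists [::]; apply: LeafSeq1.
have cs' : {in s, forall G, #|G| = d}.
  by move=> G Gs; rewrite cs // mem_rcons in_cons Gs orbT.
have [ms sq] := IH us cs' lo s_n0.
case/andP: (F_leaf s_n0) => _ /exists_inP [G].
rewrite inE mem_rcons in_cons => /orP [/eqP -> | Gs]; first by rewrite eqxx.
case/andP=> _ /forall_inP leaf.
exists (#|G :&: F| :: ms); apply: LeafSeqCons sq; rewrite ?mem_rev //.
move=> H; rewrite mem_rev => Hs; apply: (implyP (leaf H _)).
  by rewrite inE mem_rcons in_cons Hs orbT.
by apply: contraNneq Fs => <-.
Qed.

Lemma leaf_order_of_leaves S :
    (forall S', S' \subset S -> 1 < #|S'| -> exists F, is_leaf S' F) ->
  exists s, perm_eq s (enum S) /\ leaf_order s.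
Proof.
have small S' : #|S'| <= 1 -> exists s, perm_eq s (enum S') /\ leaf_order s.
  move=> le_S1; exists (enum S'); split=> // j /andP [lt_1j]; rewrite -cardE => le_jS.
  by have := leq_trans (leq_trans lt_1j le_jS) le_S1.
move: {2}#|S| (leqnn #|S|) => N; elim: N S => [|N IH] S le_SN leaves.
  exact/small/(leq_trans le_SN).
have [/small // | lt_1S] := leqP #|S| 1.
have [F /[dup] /andP [FS _] F_leaf] := leaves S (subxx S) lt_1S.
have [||s [ps lo]] := IH (S :\ F).
- by move: le_SN; rewrite (cardsD1 F S) FS.
- by move=> S' /subset_trans sS'; apply: leaves; apply: sS'; apply: subsetDl.
have rcons_S : [set G in rcons s F] = S.
  apply/setP=> G; rewrite inE mem_rcons in_cons (perm_mem ps) mem_enum !inE.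
  by case: eqP => // ->.
exists (rcons s F); split; last by apply/leaf_order_rcons; rewrite rcons_S.
apply: uniq_perm; rewrite ?enum_uniq //.
  by rewrite rcons_uniq (perm_uniq ps) enum_uniq (perm_mem ps) mem_enum !inE eqxx.
by move=> G; rewrite mem_enum -rcons_S inE.
Qed.

Lemma forest_quasi_forest D : forest D -> quasi_forest D.
Proof. exact: leaf_order_of_leaves. Qed.

Lemma quasi_forest_leaf_seq d D :
    simplicial_complex D -> pure_dim D d -> quasi_forest D -> D != set0 ->
  exists L ms, D = generated L /\ leaf_seq d L ms.
Proof.
move=> [_ closed] pure [s [ps lo]] D_n0.
have D_gen : D = generated s := generated_facets closed ps.
have s_n0 : s != [::].
  by apply: contraNneq D_n0 => s0; apply/eqP/setP=> A; rewrite D_gen s0 !inE.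
have cs : {in s, forall F, #|F| = d} by move=> F; rewrite (perm_mem ps) mem_enum => /pure.
have us : uniq s by rewrite (perm_uniq ps) enum_uniq.
have [ms sq] := leaf_seq_of_leaf_order us cs lo s_n0.
exists (rev s), ms; split=> //; rewrite D_gen.
by apply/setP=> A; rewrite !inE has_rev.
Qed.

Lemma forest_of_nested_meets D (lev : {set T} -> nat) (P : nat -> {set T}) :
    {homo P : a b / a <= b >-> a \subset b} ->
    {in facets D &, forall F H, F != H -> F :&: H = P (minn (lev F) (lev H))} ->
  forest D.
Proof.
move=> P_mono meet S sS lt_1S; have sub := subsetP sS.
have [F1 F1S] : exists F1, F1 \in S.
  by apply/set0Pn; rewrite -card_gt0 ltnW.
have [F FS max_F] := arg_maxnP lev F1S; have {}FS : F \in S := FS.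
have [G1 G1S] : exists G1, G1 \in S :\ F.
  by apply/set0Pn; rewrite -card_gt0; move: lt_1S; rewrite (cardsD1 F S) FS.
have [G GSF max_G] := arg_maxnP lev G1S; have /setD1P [GF GS] := GSF.
exists F; rewrite /is_leaf FS; apply/exists_inP; exists G; rewrite // GF.
apply/forall_inP=> H HS; apply/implyP=> HF.
rewrite !(setIC _ F) !meet ?sub // 1?eq_sym //; apply: P_mono.
have : lev H <= lev G by apply: max_G; apply/setD1P.
lia.
Qed.

End LeafSequences.

Lemma card_ord_interval_pair n a p q : a <= p <= q -> q <= n ->
  #|[set v : 'I_n | (v < a) || (p <= v < q)]| = a + (q - p).
Proof.
move=> le_apq le_qn; rewrite -sum1_card big_mkcond /=.
rewrite (eq_bigr (fun v : 'I_n => nat_of_bool ((v < a) || (p <= v < q)))); last first.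
  by move=> v _; rewrite inE; case: ifP.
rewrite -(big_mkord xpredT (fun v => nat_of_bool ((v < a) || (p <= v < q)))).
suff sumE m : \sum_(0 <= v < m) nat_of_bool ((v < a) || (p <= v < q)) =
               minn a m + (minn q m - minn p m) by rewrite sumE; lia.
elim: m => [|m IH]; first by rewrite big_geq.
rewrite big_nat_recr //= IH.
by case: (leqP a m); case: (leqP p m); case: (leqP q m); lia.
Qed.

Section BlockComplex.
Variables (d : nat) (ms : seq nat).
Hypothesis ms_le : all (leq^~ d) ms.

(* Block [j] is the initial segment [0, level j) of the base block
   [block (size ms) = [0, d)] together with [d - level j] private vertices
   [start j, start j.+1). *)
Definition level j := nth d ms j.
Definition start j := d + \sum_(k < j) (d - level k).
Definition nvert := start (size ms).
Definition block j : {set 'I_nvert} :=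
  [set v : 'I_nvert | (v < level j) || (start j <= v < start j.+1)].
Definition initial a : {set 'I_nvert} := [set v : 'I_nvert | v < a].
Definition blocks := [seq block j | j <- iota 0 (size ms).+1].

Lemma level_le j : level j <= d.
Proof.
rewrite /level; case: (ltnP j (size ms)) => [lt_js | le_sj]; last by rewrite nth_default.
exact: (allP ms_le) (mem_nth d lt_js).
Qed.

Lemma level_size : level (size ms) = d.
Proof. exact: nth_default. Qed.

Lemma startS j : start j.+1 = start j + (d - level j).
Proof. by rewrite /start big_ord_recr addnA. Qed.

Lemma start_mono : {homo start : j k / j <= k}.
Proof. by apply: homo_leq => [//|j i k|j]; [apply: leq_trans|rewrite startS leq_addr]. Qed.

Lemma d_le_start j : d <= start j.
Proof. exact: leq_addr. Qed.

Lemma startS_le_nvert j : j <= size ms -> start j.+1 <= nvert.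
Proof.
rewrite leq_eqVlt => /orP [/eqP -> | lt_js]; last exact: start_mono.
by rewrite startS level_size subnn addn0.
Qed.

Lemma card_block j : j <= size ms -> #|block j| = d.
Proof.
move=> le_js; have := startS_le_nvert le_js.
have := level_le j; have := d_le_start j; rewrite startS => le_ds le_ld le_n.
by rewrite card_ord_interval_pair startS //; lia.
Qed.

Lemma card_initial a : a <= nvert -> #|initial a| = a.
Proof.
move=> le_an; transitivity #|[set v : 'I_nvert | (v < a) || (a <= v < a)]|.
  by apply: eq_card => v; rewrite !inE; case: ltnP => //= le_av; rewrite ltnNge le_av.
by rewrite card_ord_interval_pair ?leqnn // subnn addn0.
Qed.

Lemma block_size : block (size ms) = initial d.
Proof.
apply/setP=> v; rewrite !inE startS level_size subnn addn0.
by case: (v < d); lia.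
Qed.

Lemma block_meet j k : j < k -> k <= size ms ->
  block j :&: block k = initial (minn (level j) (level k)).
Proof.
move=> lt_jk le_ks; apply/setP=> v; rewrite !inE.
have := start_mono lt_jk; have := startS j; have := level_le j; have := level_le k.
have := d_le_start j; have := d_le_start k => *.
by apply/idP/idP; lia.
Qed.

Lemma block_meet_neq j k : j != k -> j <= size ms -> k <= size ms ->
  block j :&: block k = initial (minn (level j) (level k)).
Proof.
case: (ltngtP j k) => // [lt_jk | lt_kj] _ le_js le_ks; first exact: block_meet.
by rewrite setIC minnC block_meet.
Qed.

Lemma card_block_meet_initial j : j <= size ms -> #|block j :&: initial d| = level j.
Proof.
rewrite leq_eqVlt -block_size => /orP [/eqP -> | lt_js].
  by rewrite setIid card_block ?level_size.
rewrite block_meet // level_size (minn_idPl (level_le j)) card_initial //.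
exact: leq_trans (level_le j) (d_le_start _).
Qed.

Lemma block_cover v : exists2 j, j <= size ms & v \in block j.
Proof.
have [lt_vd | le_dv] := ltnP v d.
  by exists (size ms); rewrite // block_size inE.
have find m : v < start m -> exists2 j, j < m & start j <= v < start j.+1.
  elim: m => [|m IH] lt_vm; first by move: lt_vm; rewrite /start big_ord0 addn0 ltnNge le_dv.
  have [/IH [j lt_jm v_j] | le_mv] := ltnP v (start m); first by exists j => //; lia.
  by exists m; rewrite ?le_mv.
have [j lt_js v_j] := find (size ms) (ltn_ord v).
by exists j; rewrite ?inE ?v_j ?orbT // ltnW.
Qed.

Lemma mem_blocks F : F \in blocks -> exists2 j, j <= size ms & F = block j.
Proof. by case/mapP=> j; rewrite mem_iota ltnS => /andP [_ le_js] ->; exists j. Qed.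

Lemma block_in_blocks j : j <= size ms -> block j \in blocks.
Proof. by move=> le_js; apply: map_f; rewrite mem_iota ltnS le_js. Qed.

Lemma simplicial_blocks : simplicial_complex (generated blocks).
Proof.
apply: simplicial_generated => v; have [j le_js v_j] := block_cover v.
by exists (block j); rewrite ?block_in_blocks.
Qed.

Lemma pure_blocks : pure_dim (generated blocks) d.
Proof. by apply: pure_generated => F /mem_blocks [j le_js ->]; apply: card_block. Qed.

Lemma forest_blocks : forest (generated blocks).
Proof.
apply: (@forest_of_nested_meets _ _ (fun F => #|F :&: initial d|) initial).
  by move=> a b le_ab; apply/subsetP=> v; rewrite !inE => /leq_trans; apply.
move=> F H /mem_facets_generated /mem_blocks [j le_js ->].
move=> /mem_facets_generated /mem_blocks [k le_ks ->] ne_jk.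
rewrite !card_block_meet_initial // block_meet_neq //.
by apply: contraNneq ne_jk => ->.
Qed.

Lemma leaf_seq_blocks : leaf_seq d blocks ms.
Proof.
suff suffixes k : k <= size ms ->
    leaf_seq d [seq block j | j <- iota (size ms - k) k.+1] (drop (size ms - k) ms).
  by have := suffixes _ (leqnn _); rewrite subnn drop0.
elim: k => [|k IH] lt_ks; first by rewrite subn0 drop_size; apply/LeafSeq1/card_block.
set j := size ms - k.+1; have lt_js : j < size ms by rewrite /j; lia.
have jS : j.+1 = size ms - k by rewrite /j; lia.
have -> : iota j k.+2 = j :: iota (size ms - k) k.+1 by rewrite /= jS.
have -> : drop j ms = #|block (size ms) :&: block j| :: drop (size ms - k) ms.
  rewrite (drop_nth d) // -jS setIC block_meet // level_size (minn_idPl (level_le j)).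
  by rewrite card_initial // (leq_trans (level_le j) (d_le_start _)).
apply: LeafSeqCons (card_block (ltnW lt_js)) _ _ (IH (ltnW lt_ks)).
  by apply/mapP; exists (size ms); rewrite // mem_iota; lia.
move=> H /mapP [i]; rewrite mem_iota => i_range ->.
have [lt_ji le_is] : j < i /\ i <= size ms by rewrite /j; lia.
rewrite !(setIC _ (block j)) !block_meet // level_size (minn_idPl (level_le j)).
by apply/subsetP=> v; rewrite !inE => /leq_trans; apply; apply: geq_minl.
Qed.

End BlockComplex.

Local Open Scope ring_scope.

Definition sep_poly (d : nat) (ms : seq nat) : {poly int} :=
  \sum_(m <- 0%N :: ms) \sum_(m <= t < d) 'X^t.

Lemma coef_sep_poly d ms t :
  (sep_poly d ms)`_t = if (t < d)%N then (count (leq^~ t) (0%N :: ms))%:R else 0.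
Proof.
have coef_range m : (\sum_(m <= u < d) 'X^u : {poly int})`_t = (m <= t < d)%N%:R.
  rewrite coef_sum (eq_bigr (fun u => if u == t then 1 else 0)); last first.
    by move=> u _; rewrite coefXn eq_sym; case: eqP.
  by rewrite -big_mkcond big_nat1_eq; case: ifP.
rewrite /sep_poly coef_sum (eq_bigr _ (fun m _ => coef_range m)).
case: ltnP => [lt_td | le_dt]; last first.
  by rewrite big1 // => m _; rewrite andbF.
rewrite -natr_sum big_cons /= -sum1_count [in RHS]big_mkcond /=.
by under eq_bigr => m _ do rewrite andbT.
Qed.

Lemma hpoly_bpoly d f : hpoly d f = 1 + ('X - 1) * bpoly d f.
Proof.
rewrite /hpoly /bpoly big_ord_recl /= expr0 mulr1 mulr_sumr; congr (_ + _).
by apply: eq_bigr => i _; rewrite exprS mulrCA.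
Qed.

Lemma coef_bpoly_ge d f t : (d <= t)%N -> (bpoly d f)`_t = 0.
Proof.
move=> le_dt; rewrite /bpoly coef_sum big1 // => i _.
by rewrite coefCM -polyC1 nth_default ?mulr0 // size_exp_XsubC (leq_trans _ le_dt).
Qed.

Lemma ccE d f i : (0 < i)%N -> cc d f i = bb d f i - bb d f i.+1.
Proof.
rewrite /cc /bb hpoly_bpoly coefD coef1 mulrBl mul1r coefB coefXM.
by case: i => //= i _; rewrite add0r.
Qed.

Lemma sum_cc d f k : (0 < k <= d.+1)%N -> \sum_(k <= i < d.+1) cc d f i = bb d f k.
Proof.
case/andP=> k_gt0 le_kd; rewrite (telescope_sumr_eq (fun i => - bb d f i)) //.
  by rewrite /bb coef_bpoly_ge // oppr0 add0r opprK.
by move=> j /andP [le_kj _]; rewrite ccE ?(leq_trans k_gt0) // opprK addrC.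
Qed.

Lemma bb_gt0 d f : 0 < bb d f 1 ->
    (forall i, (1 <= i < d)%N -> bb d f i <= bb d f i.+1) ->
  forall k, (1 <= k <= d)%N -> 0 < bb d f k.
Proof.
move=> bb1_gt0 bb_mono; elim=> [|[|k] IH] //= k_range.
by apply: lt_le_trans (bb_mono k.+1 _); [apply: IH|]; lia.
Qed.

Lemma cc_conditions_iff_bb_monotone d f : (0 < d)%N ->
  ((forall k, (1 <= k <= d)%N -> 0 < \sum_(k <= i < d.+1) cc d f i) /\
   (forall i, (1 <= i < d)%N -> cc d f i <= 0)) <->
  (0 < bb d f 1 /\ forall i, (1 <= i < d)%N -> bb d f i <= bb d f i.+1).
Proof.
move=> d_gt0; split=> [[sum_gt0 cc_le0] | [bb1_gt0 bb_mono]].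
  split=> [|i /[dup] i_range /cc_le0]; first by rewrite -sum_cc ?sum_gt0 //; lia.
  by rewrite ccE ?subr_le0 //; lia.
split=> [k k_range | i i_range]; first by rewrite sum_cc ?(bb_gt0 bb1_gt0) //; lia.
by rewrite ccE ?subr_le0 ?bb_mono //; lia.
Qed.

Lemma sum_Xsub1_binomial t d : (t <= d)%N ->
  \sum_(k < d.+1) ('X - 1) ^+ k *+ 'C(t, k) = 'X^t :> {poly int}.
Proof.
move=> le_td; rewrite -(subnKC le_td) -addSn big_split_ord /=.
rewrite -[in RHS](subrK 1 'X) exprD1n [X in _ + X]big1 ?addr0 // => i _.
by rewrite bin_small ?mulr0n // ltnS leq_addr.
Qed.

Lemma hpoly_of_counts d f (N : nat -> nat) (ms : seq nat) :
    all (leq^~ d) ms ->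
    (forall k, (k <= d)%N -> fshift f k = (N k)%:R) ->
    (forall k, N k + \sum_(m <- ms) 'C(m, k) = (size ms).+1 * 'C(d, k))%N ->
  hpoly d f = 'X^d *+ (size ms).+1 - \sum_(m <- ms) 'X^m.
Proof.
move=> ms_le fN counts.
have fE k : (k <= d)%N ->
    fshift f k = ((size ms).+1 * 'C(d, k))%:R - \sum_(m <- ms) ('C(m, k))%:R.
  by move=> le_kd; rewrite fN // -counts natrD -natr_sum addrK.
rewrite /hpoly.
under eq_bigr => k _ do rewrite fE ?leq_ord // mul_polyC scalerBl scaler_suml.
rewrite sumrB; congr (_ - _).
  rewrite -(sum_Xsub1_binomial (leqnn d)) -sumrMnl; apply: eq_bigr => k _.
  by rewrite scaler_nat -mulrnA mulnC.
rewrite exchange_big /=; apply: eq_big_seq => m m_ms.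
rewrite -(sum_Xsub1_binomial (allP ms_le m m_ms)); apply: eq_bigr => k _.
by rewrite scaler_nat.
Qed.

Lemma Xsub1_mul_sumX m d : (m <= d)%N ->
  ('X - 1) * \sum_(m <= t < d) 'X^t = 'X^d - 'X^m :> {poly int}.
Proof.
move=> le_md; rewrite mulr_sumr (telescope_sumr_eq (fun t => 'X^t)) // => k _.
by rewrite mulrBl mul1r -exprS.
Qed.

Lemma bpoly_sep_poly d f ms : all (leq^~ d) ms ->
  hpoly d f = 'X^d *+ (size ms).+1 - \sum_(m <- ms) 'X^m ->
  bpoly d f = sep_poly d ms.
Proof.
move=> ms_le hE.
have Xsub1_n0 : ('X - 1 : {poly int}) != 0 by rewrite -polyC1 polyXsubC_eq0.
apply: (mulfI Xsub1_n0); apply: (addrI 1).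
rewrite -hpoly_bpoly hE /sep_poly big_cons mulrDr Xsub1_mul_sumX // mulr_sumr.
have -> : \sum_(m <- ms) ('X - 1) * \sum_(m <= t < d) 'X^t =
           \sum_(m <- ms) ('X^d - 'X^m) :> {poly int}.
  by apply: eq_big_seq => m m_ms; rewrite Xsub1_mul_sumX ?(allP ms_le).
rewrite sumrB big_const_seq count_predT iter_addr_0 expr0 mulrSr.
ring.
Qed.

Lemma eq_bpoly d f g : (forall i, (i < d)%N -> f i = g i) -> bpoly d f = bpoly d g.
Proof. by move=> fg; apply: eq_bigr => i _; rewrite fg. Qed.

Lemma bpoly_inj d f g : bpoly d f = bpoly d g -> forall i, (i < d)%N -> f i = g i.
Proof.
have shiftE h : bpoly d h \Po ('X + 1) = \poly_(i < d) h i.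
  rewrite /bpoly poly_def rmorph_sum; apply: eq_bigr => i _ /=.
  rewrite rmorphM rmorphXn /= comp_polyC comp_polyB comp_polyX rmorph1 addrK.
  by rewrite mul_polyC.
move=> fg i lt_id; have := congr1 (fun p => (p \Po ('X + 1))`_i) fg.
by rewrite /= !shiftE !coef_poly lt_id.
Qed.

Lemma bb_monotone_sep_poly d f ms : (0 < d)%N -> bpoly d f = sep_poly d ms ->
  0 < bb d f 1 /\ forall i, (1 <= i < d)%N -> bb d f i <= bb d f i.+1.
Proof.
move=> d_gt0 fE; rewrite /bb fE coef_sep_poly d_gt0 ltr0n; split=> // i i_range.
have [lt_i'd lt_id] : (i.-1 < d)%N /\ (i < d)%N by lia.
rewrite /= !coef_sep_poly lt_i'd lt_id ler_nat /= leq_add2l.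
by apply: sub_count => m /= le_mi; apply: leq_trans le_mi (leq_pred i).
Qed.

Lemma exists_seq_count_leq (c : nat -> nat) (d : nat) :
    (forall t, t.+1 < d -> c t <= c t.+1)%N ->
  exists2 ms, all (gtn d) ms & forall t, (t < d)%N -> count (leq^~ t) ms = c t.
Proof.
elim: d => [|d IH] c_mono; first by exists [::].
have [|ms ms_lt ms_count] := IH.
  by move=> t lt_td; apply: c_mono; apply: ltnW.
have size_ms : (size ms <= c d)%N.
  case: d {IH} c_mono ms_lt ms_count => [_ | d c_mono ms_lt ms_count].
    by case: ms => // m ms /andP [].
  rewrite -(count_predT ms) -(@eq_in_count _ (leq^~ d)) ?ms_count ?c_mono //.
  by move=> m /(allP ms_lt).
exists (ms ++ nseq (c d - size ms) d).
  rewrite all_cat all_nseq /= ltnSn orbT andbT.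
  by apply: sub_all ms_lt => m /ltnW.
move=> t; rewrite ltnS leq_eqVlt => /orP [/eqP -> | lt_td].
  rewrite count_cat count_nseq leqnn mul1n (@eq_in_count _ _ predT) ?count_predT.
    by rewrite subnKC.
  by move=> m /(allP ms_lt) /ltnW.
by rewrite count_cat count_nseq leqNgt lt_td mul0n addn0 ms_count.
Qed.

Lemma sep_poly_of_bb_monotone d f : 0 < bb d f 1 ->
    (forall i, (1 <= i < d)%N -> bb d f i <= bb d f i.+1) ->
  exists2 ms, all (leq^~ d) ms & bpoly d f = sep_poly d ms.
Proof.
move=> bb1_gt0 bb_mono; have bb_pos := bb_gt0 bb1_gt0 bb_mono.
pose c t := `|bb d f t.+1 - 1|%N.
have cE t : (t < d)%N -> (c t)%:R = bb d f t.+1 - 1.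
  by move=> lt_td; rewrite natz gez0_abs // subr_ge0 -gtz0_ge1 bb_pos.
have [|ms ms_lt ms_count] := exists_seq_count_leq (c := c) (d := d).
  move=> t lt_td; rewrite -(ler_nat int) !cE ?lerB ?bb_mono //; lia.
exists ms; first by apply: sub_all ms_lt => m /ltnW.
apply/polyP=> t; rewrite coef_sep_poly; case: ltnP => [lt_td | le_dt].
  by rewrite /= natrD ms_count // cE // addrC subrK.
exact: coef_bpoly_ge.
Qed.

Lemma bpoly_leaf_seq (T : finType) d (L : seq {set T}) ms : leaf_seq d L ms ->
  bpoly d (fun i => (fvec (generated L) i)%:Z) = sep_poly d ms.
Proof.
move=> sq; have ms_le := leaf_seq_sep_le sq.
have counts k :
    (nfaces (generated L) k + \sum_(m <- ms) 'C(m, k) = (size ms).+1 * 'C(d, k))%N.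
  by rewrite -(leaf_seq_size sq) (nfaces_leaf_seq k sq).
apply: (bpoly_sep_poly ms_le).
apply: (hpoly_of_counts ms_le _ counts) => -[|k] _ /=; last by rewrite natz.
have := counts 0%N; rewrite bin0 muln1 (eq_bigr (fun=> 1%N)) => [|m _]; last exact: bin0.
by rewrite sum1_size -addn1 addnC => /addnI ->.
Qed.

Lemma bb_monotone_quasi_forest d f n (D : {set {set 'I_n}}) :
    (0 < d)%N -> (forall i, (i < d)%N -> 0 < f i) ->
    simplicial_complex D -> pure_dim D d -> quasi_forest D -> has_fvector D d f ->
  0 < bb d f 1 /\ forall i, (1 <= i < d)%N -> bb d f i <= bb d f i.+1.
Proof.
move=> d_gt0 f_gt0 sD pD qD fD.
have D_n0 : D != set0.
  have := f_gt0 0%N d_gt0; rewrite -fD // ltz_nat card_gt0.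
  by apply: contraNneq => ->; apply/eqP/setP=> A; rewrite !inE.
have [L [ms [D_gen sq]]] := quasi_forest_leaf_seq sD pD qD D_n0.
apply: (bb_monotone_sep_poly d_gt0 (etrans _ (bpoly_leaf_seq sq))).
by rewrite -D_gen; apply: eq_bpoly => i lt_id; rewrite fD.
Qed.

Lemma bb_monotone_forest d (f : nat -> int) :
    (0 < bb d f 1 /\ forall i, (1 <= i < d)%N -> bb d f i <= bb d f i.+1) ->
  exists (n : nat) (D : {set {set 'I_n}}),
    simplicial_complex D /\ pure_dim D d /\ forest D /\ has_fvector D d f.
Proof.
case=> bb1_gt0 bb_mono; have [ms ms_le fE] := sep_poly_of_bb_monotone bb1_gt0 bb_mono.
exists (nvert d ms), (generated (blocks d ms)).
split; first exact: simplicial_blocks.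
split; first exact: pure_blocks.
split; first exact: forest_blocks.
move=> i lt_id; have := bpoly_leaf_seq (leaf_seq_blocks ms_le).
by rewrite -fE => /bpoly_inj/(_ i lt_id).
Qed.

Theorem theorem1p2 (d : nat) (f : nat -> int) :
  (1 <= d)%N -> (forall i, (i < d)%N -> 0 < f i) ->
  [<->
   (* (i) *)
   (exists (n : nat) (D : {set {set 'I_n}}),
      simplicial_complex D /\ pure_dim D d /\ quasi_forest D /\
      has_fvector D d f);
   (* (ii) *)
   (exists (n : nat) (D : {set {set 'I_n}}),
      simplicial_complex D /\ pure_dim D d /\ forest D /\
      has_fvector D d f);
   (* (iii) *)
   ((forall k, (1 <= k <= d)%N -> 0 < \sum_(k <= i < d.+1) cc d f i) /\
    (forall i, (1 <= i < d)%N -> cc d f i <= 0));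
   (* (iv) *)
   (0 < bb d f 1 /\ forall i, (1 <= i < d)%N -> bb d f i <= bb d f i.+1)].
Proof.
move=> d_gt0 f_gt0; have bb_mono := bb_monotone_quasi_forest d_gt0 f_gt0.
tfae.
- by case=> n [D [sD [pD [qD fD]]]]; apply: bb_monotone_forest; apply: bb_mono sD pD qD fD.
- case=> n [D [sD [pD [/forest_quasi_forest qD fD]]]].
  by apply/(cc_conditions_iff_bb_monotone _ d_gt0); apply: bb_mono sD pD qD fD.
- by case/(cc_conditions_iff_bb_monotone _ d_gt0).
- by case/bb_monotone_forest=> n [D [sD [pD [/forest_quasi_forest qD fD]]]]; exists n, D.
Qed.
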